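(* Let $\{\varphi_n\}_{n\ge1}$ be an orthonormal system on $[0,1]$ and let $\{d_n\}$ be a sequence of real numbers with $d_n=O\!\left(\frac{\sqrt{n}}{\log^2(n+1)}\right)$. For $a=\{a_n\}\in\ell_2$ put $Q_n(d,a,x)=\sum_{k=1}^{n} d_k a_k \log k\,\varphi_k(x)$ and $B_n(d,a)=\max_{1\le i<n}\left|\int_0^{i/n}Q_n(d,a,x)\,dx\right|$. Suppose that for every $a\in\ell_2$, $B_n(d,a)=O(1)$ as $n\to\infty$. Then for every $f\in BV$, $$\sum_{k=1}^{\infty} d_k^2\, C_k^2(f)\,\log^2 k<+\infty,$$ where $C_k(f)=\int_0^1 f(x)\varphi_k(x)\,dx$.
   Context: $BV$ denotes the class of (finite-valued) functions of bounded variation on $[0,1]$. An orthonormal system on $[0,1]$ is a sequence of functions orthonormal in $L_2(0,1)$. $\log$ denotes the logarithm (so $\log 1=0$). *)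

From HB Require Import structures.
From mathcomp Require Import all_boot all_order all_algebra.
From mathcomp Require Import all_classical all_reals all_analysis.
Set Implicit Arguments. Unset Strict Implicit. Unset Printing Implicit Defensive.
Import Order.TTheory GRing.Theory Num.Theory.
Import numFieldNormedType.Exports.
Local Open Scope classical_set_scope.
Local Open Scope ring_scope.


Definition ONS {R : realType} (phi : nat -> R -> R) : Prop :=
  (forall n, (0 < n)%N ->
     measurable_fun (`[0%R, 1%R] : set R) (phi n) /\
     (@lebesgue_measure R).-integrable (`[0%R, 1%R] : set R) (fun x => ((phi n x) ^+ 2)%:E)) /\
  (forall n m, (0 < n)%N -> (0 < m)%N ->
     Rintegral (@lebesgue_measure R) (`[0%R, 1%R] : set R) (fun x => phi n x * phi m x) = (n == m)%:R).

Definition in_l2 {R : realType} (a : nat -> R) : Prop :=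
  (\sum_(1 <= n <oo) ((a n) ^+ 2)%:E < +oo)%E.

Definition Qn {R : realType} (phi : nat -> R -> R) (d a : nat -> R) (n : nat)
  (x : R) : R :=
  \sum_(1 <= k < n.+1) d k * a k * ln (k%:R) * phi k x.

(* B_n(d,a) = max_{1 <= i < n} | int_0^{i/n} Q_n(d,a,x) dx |  (= 0 if n <= 1) *)
Definition Bn {R : realType} (phi : nat -> R -> R) (d a : nat -> R) (n : nat) : R :=
  \big[Num.max/0]_(1 <= i < n)
     `| Rintegral (@lebesgue_measure R) (`[0%R, (i%:R / n%:R)] : set R) (Qn phi d a n) |.

Definition Ck {R : realType} (phi : nat -> R -> R) (f : R -> R) (k : nat) : R :=
  Rintegral (@lebesgue_measure R) (`[0%R, 1%R] : set R) (fun x => f x * phi k x).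

From HB Require Import structures.
From mathcomp Require Import all_boot all_order all_algebra.
From mathcomp Require Import all_classical all_reals all_analysis.
From mathcomp Require Import measurable_realfun ring lra.
Set Implicit Arguments. Unset Strict Implicit. Unset Printing Implicit Defensive.
Import Order.TTheory GRing.Theory Num.Theory.
Import numFieldNormedType.Exports.
Local Open Scope classical_set_scope.
Local Open Scope ring_scope.

(* Write b_k = d_k log k C_k(f).  By the Jordan decomposition we may assume f
   nondecreasing, and by the Abel-Dini theorem it suffices to bound
   sum_{k <= n} a_k b_k = int_0^1 f Q_n(d, a) uniformly in n for each a in the
   unit ball of l_2.  Let s_n be the step function equal to f(i/n) on
   ((i-1)/n, i/n].  Abel summation writes int s_n Q_n through the partial
   integrals int_0^{i/n} Q_n, which are bounded by B_n(d, a), with total weight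
   f(1) - f(0).  For the remainder, 2|uv| <= n u^2 + v^2/n gives
   |int (f - s_n) Q_n| <= O(f(1) - f(0)) + ||Q_n||^2 / (2n), and
   ||Q_n||^2 = sum_{k <= n} (d_k a_k log k)^2 = O(n) since d_k log k = O(sqrt k). *)

Section real_integrable.
Context d (T : measurableType d) (R : realType) (mu : {measure set T -> \bar R}).
Context (D : set T) (mD : measurable D).
Implicit Types u v : T -> R.

Lemma integrableD_EFin u v : mu.-integrable D (EFin \o u) ->
  mu.-integrable D (EFin \o v) -> mu.-integrable D (EFin \o (fun x => u x + v x)).
Proof.
move=> iu iv; apply: (eq_integrable mD _ _ _ (integrableD mD iu iv)) => x _.
by rewrite /= EFinD.
Qed.

Lemma integrableZl_EFin (c : R) u : mu.-integrable D (EFin \o u) ->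
  mu.-integrable D (EFin \o (fun x => c * u x)).
Proof.
move=> iu; apply: (eq_integrable mD _ _ _ (integrableZl mD c iu)) => x _.
by rewrite /= EFinM.
Qed.

Lemma integrable_sum_EFin (I : eqType) (s : seq I) (P : pred I) (F : I -> T -> R) :
  (forall i, i \in s -> P i -> mu.-integrable D (EFin \o F i)) ->
  mu.-integrable D (EFin \o (fun x => \sum_(i <- s | P i) F i x)).
Proof.
move=> iF; have /(integrable_sum mD s) : forall i, (i \in s) && P i ->
    mu.-integrable D (EFin \o F i) by move=> i /andP[]; exact: iF.
by apply: (eq_integrable mD) => x _; rewrite /= sumEFin big_seq_cond.
Qed.

Lemma Rintegral_sum (I : eqType) (s : seq I) (P : pred I) (F : I -> T -> R) :
  (forall i, i \in s -> P i -> mu.-integrable D (EFin \o F i)) ->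
  \int[mu]_(x in D) (\sum_(i <- s | P i) F i x) =
  \sum_(i <- s | P i) \int[mu]_(x in D) F i x.
Proof.
elim: s => [_|i s IH iF].
  by under eq_Rintegral do rewrite big_nil; rewrite Rintegral_cst // mul0r big_nil.
have iFs j : j \in s -> P j -> mu.-integrable D (EFin \o F j).
  by move=> js; apply: iF; rewrite inE js orbT.
rewrite big_cons; under eq_Rintegral do rewrite big_cons.
case: ifP => Pi; last exact: IH.
rewrite RintegralD ?IH //; last exact: integrable_sum_EFin.
by apply: iF; rewrite ?inE ?eqxx.
Qed.

Lemma le_integrable_EFin u v : measurable_fun D u ->
  (forall x, D x -> `|u x| <= v x) -> mu.-integrable D (EFin \o v) ->
  mu.-integrable D (EFin \o u).
Proof.
move=> meas_u uv iv; apply: le_integrable iv => //; first exact/measurable_EFinP.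
by move=> x Dx; rewrite /= lee_fin (le_trans (uv x Dx)) ?ler_norm.
Qed.

Lemma integrableMl_EFin (h u : T -> R) : measurable_fun D h ->
  [bounded h x | x in D] -> mu.-integrable D (EFin \o u) ->
  mu.-integrable D (EFin \o (fun x => h x * u x)).
Proof.
move=> mh bh iu.
by apply: (eq_integrable mD _ _ _ (integrableMr mD mh bh iu)) => x _.
Qed.

Lemma normr_RintegralM_le (m : R) u v : 0 < m ->
  mu.-integrable D (EFin \o (fun x => u x * v x)) ->
  mu.-integrable D (EFin \o (fun x => u x ^+ 2)) ->
  mu.-integrable D (EFin \o (fun x => v x ^+ 2)) ->
  `|\int[mu]_(x in D) (u x * v x)| <=
  2^-1 * (m * \int[mu]_(x in D) (u x ^+ 2) + m^-1 * \int[mu]_(x in D) (v x ^+ 2)).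
Proof.
move=> m0 iuv iu2 iv2.
have young x : `|u x * v x| <= 2^-1 * (m * u x ^+ 2 + m^-1 * v x ^+ 2).
  rewrite normrM -(real_normK (num_real (u x))) -(real_normK (num_real (v x))).
  move: (normr_ge0 (u x)) (normr_ge0 (v x)); move: `|u x| `|v x| => a b a0 b0.
  rewrite -(ler_pM2l m0).
  have -> : m * (2^-1 * (m * a ^+ 2 + m^-1 * b ^+ 2)) = 2^-1 * ((m * a) ^+ 2 + b ^+ 2).
    by field; rewrite gt_eqF.
  by have := sqr_ge0 (m * a - b); nra.
apply: le_trans (le_normr_Rintegral mD iuv) _.
rewrite -2?RintegralZl // -RintegralD //; [|exact: integrableZl_EFin..].
rewrite -(RintegralZl _ mD); last by apply: integrableD_EFin; exact: integrableZl_EFin.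
apply: (le_Rintegral mD); first exact: (integrable_norm iuv).
  by apply: integrableZl_EFin; apply: integrableD_EFin; exact: integrableZl_EFin.
by move=> x _; exact: young.
Qed.

End real_integrable.

Lemma le_bounded T {R : realType} (A : set T) (h : T -> R) (K : R) :
  (forall x, A x -> `|h x| <= K) -> [bounded h x | x in A].
Proof.
move=> hK; exists K; split => [|y Ky x Ax]; first exact: num_real.
exact: le_trans (hK x Ax) (ltW Ky).
Qed.

Lemma normr_indic_le1 T {R : realType} (A : set T) (x : T) : `|\1_A x : R| <= 1.
Proof. by rewrite indicE; case: (x \in A); rewrite ?normr1 ?normr0. Qed.

Section monotone_on_interval.
Context {R : realType} (a b : R) (f : R -> R).
Hypothesis ab : a <= b.
Hypothesis f_nd : {in `[a, b] &, nondecreasing_fun f}.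

(* Composing with [clamp] extends [f] to a globally nondecreasing function,
   to which [nondecreasing_measurable] applies. *)
Definition clamp (x : R) : R := Num.min b (Num.max a x).

Lemma clamp_itv x : clamp x \in `[a, b].
Proof. by rewrite /clamp in_itv /= le_min ab le_max lexx ge_min lexx. Qed.

Lemma clamp_id x : x \in `[a, b] -> clamp x = x.
Proof. by rewrite in_itv /= /clamp => /andP[ax xb]; rewrite max_r // min_r. Qed.

Lemma nondecreasing_clamp : nondecreasing_fun clamp.
Proof.
move=> x y xy; rewrite /clamp le_min ge_min lexx /= ge_min ge_max !le_max lexx xy.
by rewrite !orbT.
Qed.

Lemma nondecreasing_in_measurable : measurable_fun `[a, b] f.
Proof.
have fc : nondecreasing_fun (f \o clamp).
  by move=> x y xy; apply: f_nd; rewrite ?clamp_itv ?nondecreasing_clamp.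
apply: (eq_measurable_fun (f \o clamp)); last exact: nondecreasing_measurable.
by move=> x /set_mem xab /=; rewrite clamp_id.
Qed.

Lemma normr_nondecreasing_in_le x : x \in `[a, b] -> `|f x| <= `|f a| + `|f b|.
Proof.
move=> xab; move: (xab); rewrite in_itv /= => /andP[ax xb].
have aab : a \in `[a, b] by rewrite in_itv /= lexx ab.
have bab : b \in `[a, b] by rewrite in_itv /= lexx ab.
have := f_nd aab xab ax; have := f_nd xab bab xb.
have := ler_norm (f b); have := ler_norm (- f a); rewrite normrN.
have := normr_ge0 (f a); have := normr_ge0 (f b).
rewrite ler_norml; lra.
Qed.

Lemma nondecreasing_in_bounded : [bounded f x | x in `[a, b]%classic].
Proof. exact: le_bounded (fun x => @normr_nondecreasing_in_le x). Qed.

End monotone_on_interval.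

Lemma bounded_variation_nondecreasing_sub {R : realType} (a b : R) (f : R -> R) :
  bounded_variation a b f -> exists g h : R -> R,
  [/\ {in `[a, b] &, nondecreasing_fun g}, {in `[a, b] &, nondecreasing_fun h} &
      {in `[a, b], forall x, f x = g x - h x}].
Proof.
move=> bvf; exists (fine \o neg_tv a (\- f)), (fine \o neg_tv a f); split.
- exact/fine_neg_tv_nondecreasing/bounded_variationN.
- exact: fine_neg_tv_nondecreasing.
- exact: bounded_variation_pos_neg_tvE.
Qed.

Section unit_interval.
Context {R : realType}.
Local Notation mu := (@lebesgue_measure R).
Local Notation I01 := (`[0%R, 1%R]%classic : set R).
Implicit Types (u h : R -> R).

Lemma bounded_integrable01 h (M : R) : measurable_fun I01 h ->
  (forall x, I01 x -> `|h x| <= M) -> mu.-integrable I01 (EFin \o h).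
Proof.
have mu01 : (mu I01 < +oo)%E by rewrite lebesgue_measure_itv /= lte01 -EFinB ltry.
by move=> mh hM; apply: measurable_bounded_integrable => //; exact: le_bounded hM.
Qed.

Lemma integrable_indicM01 (p q : R) u : mu.-integrable I01 (EFin \o u) ->
  mu.-integrable I01 (EFin \o (fun x => \1_(`[p, q] : set R) x * u x)).
Proof.
apply: integrableMl_EFin; first exact: measurable_itv.
  exact: measurable_indic.
by apply: (le_bounded (K := 1)) => x _; exact: normr_indic_le1.
Qed.

Lemma Rintegral_indicM01 (p q : R) u : 0 <= p -> q <= 1 ->
  \int[mu]_(x in I01) (\1_(`[p, q] : set R) x * u x) = \int[mu]_(x in `[p, q]) u x.
Proof.
move=> p0 q1; have sub01 : `[p, q] `<=` I01.
  move=> x /=; rewrite !in_itv /= => /andP[px xq].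
  by rewrite (le_trans p0 px) (le_trans xq q1).
rewrite -[in RHS](setIidr sub01) Rintegral_mkcondr; apply: eq_Rintegral => x _.
by rewrite patch_indic /= mulrC.
Qed.

Lemma Rintegral_indic01 (p q : R) : 0 <= p -> p <= q -> q <= 1 ->
  \int[mu]_(x in I01) \1_(`[p, q] : set R) x = q - p.
Proof.
move=> p0 pq q1.
transitivity (\int[mu]_(x in I01) (\1_(`[p, q] : set R) x * 1)).
  by apply: eq_Rintegral => x _; rewrite mulr1.
rewrite Rintegral_indicM01 // Rintegral_cst ?mul1r; last exact: measurable_itv.
change (fine (lebesgue_measure (`[p, q]%classic : set R)) = q - p).
rewrite lebesgue_measure_itv /= lte_fin lt_neqAle pq andbT.
by case: eqP => [->|]; rewrite ?subrr.
Qed.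

End unit_interval.

Section orthonormal_system.
Context {R : realType} (phi : nat -> R -> R).
Hypothesis phi_ons : ONS phi.
Local Notation mu := (@lebesgue_measure R).
Local Notation I01 := (`[0%R, 1%R]%classic : set R).
Let mI01 : measurable (I01 : set (measurableTypeR R)) := measurable_itv _.

Lemma ONS_measurable k : (0 < k)%N -> measurable_fun I01 (phi k).
Proof. by move=> k0; exact: (phi_ons.1 k k0).1. Qed.

Lemma ONS_sqr_integrable k : (0 < k)%N ->
  mu.-integrable I01 (EFin \o (fun x => phi k x ^+ 2)).
Proof. by move=> k0; exact: (phi_ons.1 k k0).2. Qed.

Lemma ONS_orthonormal k j : (0 < k)%N -> (0 < j)%N ->
  \int[mu]_(x in I01) (phi k x * phi j x) = (k == j)%:R.
Proof. exact: phi_ons.2. Qed.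

Lemma ONS_integrable k : (0 < k)%N -> mu.-integrable I01 (EFin \o phi k).
Proof.
move=> k0.
apply: (@le_integrable_EFin _ _ _ mu I01 mI01 (phi k) (fun x => 1 + phi k x ^+ 2)).
- exact: ONS_measurable.
- move=> x _; rewrite -(real_normK (num_real (phi k x))).
  by have := normr_ge0 (phi k x); nra.
apply: (integrableD_EFin mI01); last exact: ONS_sqr_integrable.
by apply: (bounded_integrable01 (M := 1)) => // x _; rewrite normr1.
Qed.

Lemma ONS_mul_integrable k j : (0 < k)%N -> (0 < j)%N ->
  mu.-integrable I01 (EFin \o (fun x => phi k x * phi j x)).
Proof.
move=> k0 j0; apply: (@le_integrable_EFin _ _ _ mu I01 mI01
  (fun x => phi k x * phi j x) (fun x => phi k x ^+ 2 + phi j x ^+ 2)).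
- by apply: measurable_funM; exact: ONS_measurable.
- move=> x _; rewrite normrM -(real_normK (num_real (phi k x))).
  rewrite -(real_normK (num_real (phi j x))).
  by have := normr_ge0 (phi k x); have := normr_ge0 (phi j x); nra.
by apply: (integrableD_EFin mI01); exact: ONS_sqr_integrable.
Qed.

Lemma ONS_boundedM_integrable (h : R -> R) k : (0 < k)%N -> measurable_fun I01 h ->
  [bounded h x | x in I01] -> mu.-integrable I01 (EFin \o (fun x => h x * phi k x)).
Proof. by move=> k0 mh bh; apply: integrableMl_EFin => //; exact: ONS_integrable. Qed.

Lemma CkB (f g h : R -> R) k : (0 < k)%N ->
  measurable_fun I01 g -> [bounded g x | x in I01] ->
  measurable_fun I01 h -> [bounded h x | x in I01] ->
  (forall x, I01 x -> f x = g x - h x) -> Ck phi f k = Ck phi g k - Ck phi h k.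
Proof.
move=> k0 mg bg mh bh fE; rewrite /Ck -RintegralB //; last 2 first.
- exact: ONS_boundedM_integrable.
- exact: ONS_boundedM_integrable.
by apply: eq_Rintegral => x /set_mem /fE ->; rewrite mulrBl.
Qed.

Section finite_sums.
Variables (c : nat -> R) (n : nat).

Lemma index_iota1_gt0 k : k \in index_iota 1 n.+1 -> (0 < k)%N.
Proof. by rewrite mem_index_iota => /andP[]. Qed.

Lemma ONS_sum_integrable :
  mu.-integrable I01 (EFin \o (fun x => \sum_(1 <= k < n.+1) c k * phi k x)).
Proof.
apply: (integrable_sum_EFin mI01) => k /index_iota1_gt0 k0 _.
by apply: (integrableZl_EFin mI01); exact: ONS_integrable.
Qed.

Lemma ONS_sum_sqrE x : (\sum_(1 <= k < n.+1) c k * phi k x) ^+ 2 =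
  \sum_(1 <= k < n.+1) \sum_(1 <= j < n.+1) c k * c j * (phi k x * phi j x).
Proof.
rewrite expr2 big_distrl /=; apply: eq_bigr => k _.
by rewrite big_distrr /=; apply: eq_bigr => j _; ring.
Qed.

Lemma ONS_sum_sqr_integrable :
  mu.-integrable I01 (EFin \o (fun x => (\sum_(1 <= k < n.+1) c k * phi k x) ^+ 2)).
Proof.
apply: (eq_integrable mI01 _ _ (fun x _ => esym (congr1 EFin (ONS_sum_sqrE x)))).
apply: (integrable_sum_EFin mI01) => k /index_iota1_gt0 k0 _.
apply: (integrable_sum_EFin mI01) => j /index_iota1_gt0 j0 _.
by apply: (integrableZl_EFin mI01); exact: ONS_mul_integrable.
Qed.

Lemma Rintegral_ONS_sum_sqr :
  \int[mu]_(x in I01) (\sum_(1 <= k < n.+1) c k * phi k x) ^+ 2 =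
  \sum_(1 <= k < n.+1) c k ^+ 2.
Proof.
have iF k j : (0 < k)%N -> (0 < j)%N ->
    mu.-integrable I01 (EFin \o (fun x => c k * c j * (phi k x * phi j x))).
  by move=> k0 j0; apply: (integrableZl_EFin mI01); exact: ONS_mul_integrable.
under eq_Rintegral do rewrite ONS_sum_sqrE.
rewrite (Rintegral_sum mI01); last first.
  move=> k /index_iota1_gt0 k0 _.
  by apply: (integrable_sum_EFin mI01) => j /index_iota1_gt0 j0 _; exact: iF.
apply: eq_big_seq => k /[dup] kn /index_iota1_gt0 k0.
rewrite (Rintegral_sum mI01); last by move=> j /index_iota1_gt0 j0 _; exact: iF.
rewrite (bigD1_seq k) ?iota_uniq //= big1_seq ?addr0.
  rewrite RintegralZl ?ONS_orthonormal //; last exact: ONS_mul_integrable.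
  by rewrite eqxx mulr1 expr2.
move=> j /andP[jk /index_iota1_gt0 j0].
rewrite RintegralZl ?ONS_orthonormal //; last exact: ONS_mul_integrable.
by rewrite eq_sym (negbTE jk) mulr0.
Qed.

Lemma Rintegral_mul_ONS_sum (f : R -> R) :
  measurable_fun I01 f -> [bounded f x | x in I01] ->
  \int[mu]_(x in I01) (f x * \sum_(1 <= k < n.+1) c k * phi k x) =
  \sum_(1 <= k < n.+1) c k * Ck phi f k.
Proof.
move=> mf bf.
have iF k : (0 < k)%N -> mu.-integrable I01 (EFin \o (fun x => c k * (f x * phi k x))).
  by move=> k0; apply: (integrableZl_EFin mI01); exact: ONS_boundedM_integrable.
transitivity (\int[mu]_(x in I01) \sum_(1 <= k < n.+1) c k * (f x * phi k x)).
  by apply: eq_Rintegral => x _; rewrite big_distrr /=; apply: eq_bigr => k _; ring.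
rewrite (Rintegral_sum mI01); last by move=> k /index_iota1_gt0 k0 _; exact: iF.
apply: eq_big_seq => k /index_iota1_gt0 k0.
by rewrite RintegralZl //; exact: ONS_boundedM_integrable.
Qed.

End finite_sums.
End orthonormal_system.

Section grid.
Context {R : realType} (n : nat).
Hypothesis n_gt0 : (0 < n)%N.

Definition grid (i : nat) : R := i%:R / n%:R.

Lemma grid_le i j : (i <= j)%N -> grid i <= grid j.
Proof. by move=> ij; rewrite ler_wpM2r ?invr_ge0 ?ler0n ?ler_nat. Qed.

Lemma grid0 : grid 0 = 0. Proof. by rewrite /grid mul0r. Qed.

Lemma gridn : grid n = 1. Proof. by rewrite /grid divff // pnatr_eq0 -lt0n. Qed.

Lemma gridS i : grid i.+1 - grid i = n%:R^-1.
Proof. by rewrite /grid -mulrBl -natrB // subSnn mul1r. Qed.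

Lemma grid_ge0 i : 0 <= grid i.
Proof. by rewrite -grid0 grid_le. Qed.

Lemma grid_le1 i : (i <= n)%N -> grid i <= 1.
Proof. by move=> ni; rewrite -gridn grid_le. Qed.

Lemma grid_itv i : (i <= n)%N -> grid i \in `[0, 1].
Proof. by move=> ni; rewrite in_itv /= grid_ge0 grid_le1. Qed.

Lemma grid_locate x : x \in `[0, 1] -> exists2 j, (j < n)%N &
  [/\ grid j <= x, x <= grid j.+1 & forall i, (0 < i)%N -> (x <= grid i) = (j < i)%N].
Proof.
rewrite in_itv /= => /andP[x0 x1].
have [->|x_neq0] := eqVneq x 0.
  by exists 0%N => //; split; rewrite -?grid0 ?grid_le // => i i0; rewrite grid_le.
have x_gt0 : 0 < x by rewrite lt_neqAle eq_sym x_neq0.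
have below m : x <= grid m -> exists2 j, (j < m)%N & grid j < x <= grid j.+1.
  elim: m => [|m IH] xm; first by move: x_gt0; rewrite ltNge -grid0 xm.
  have [/IH[j jm xj]|mx] := leP x (grid m); last by exists m => //; rewrite mx xm.
  by exists j => //; exact: ltnW.
have /below[j jn /andP[xj jx]] : x <= grid n by rewrite gridn.
exists j => //; split => //; first exact: ltW.
move=> i i0; case: (ltnP j i) => ji; first by rewrite (le_trans jx) // grid_le.
by apply/negbTE; rewrite -ltNge (le_lt_trans _ xj) // grid_le.
Qed.

End grid.

Section upper_step_function.
Context {R : realType} (f : R -> R) (n : nat).
Hypothesis f_nd : {in `[0, 1] &, nondecreasing_fun f}.
Hypothesis n_gt0 : (0 < n)%N.
Local Notation mu := (@lebesgue_measure R).
Local Notation I01 := (`[0%R, 1%R]%classic : set R).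
Local Notation grid := (@grid R n).
Let mI01 : measurable (I01 : set (measurableTypeR R)) := measurable_itv _.
Local Notation M := (`|f 0| + `|f 1|).

Definition jump (i : nat) : R := f (grid i.+1) - f (grid i).

(* [upper_step x = f ((j + 1) / n)] on [(j / n, (j + 1) / n]] (see [upper_stepE]);
   written with the indicators of [[0, i / n]], its pairing with [Q] is an Abel
   sum of the partial integrals of [Q]. *)
Definition upper_step (x : R) : R :=
  f 1 - \sum_(1 <= i < n) jump i * \1_(`[0, grid i] : set R) x.

Definition jump_cover (x : R) : R :=
  \sum_(0 <= i < n) jump i * \1_(`[grid i, grid i.+1] : set R) x.

Lemma jump_ge0 i : (i < n)%N -> 0 <= jump i.
Proof. by move=> ilt; rewrite subr_ge0 f_nd ?grid_itv ?grid_le // ltnW. Qed.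

Let f_bounded x : x \in `[0, 1] -> `|f x| <= M.
Proof. exact: normr_nondecreasing_in_le ler01 f_nd x. Qed.

Lemma upper_stepE x j : x \in `[0, 1] -> (j < n)%N ->
  (forall i, (0 < i)%N -> (x <= grid i) = (j < i)%N) -> upper_step x = f (grid j.+1).
Proof.
move=> x01 jn hj; rewrite /upper_step (big_cat_nat _ (n := j.+1)) //=.
rewrite big1_seq ?add0r; last first.
  move=> i /andP[_]; rewrite mem_index_iota => /andP[i1 ij].
  by rewrite indicE mem_setE /= in_itv /= hj // ltnNge -ltnS ij andbF mulr0.
rewrite (eq_big_seq jump); last first.
  move=> i; rewrite mem_index_iota => /andP[ji _].
  rewrite indicE mem_setE /= in_itv /= hj ?(leq_trans _ ji) // andbT.
  by move: x01; rewrite in_itv /= => /andP[-> _]; rewrite mulr1.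
by rewrite telescope_sumr // gridn //; ring.
Qed.

Lemma upper_step_bounded x : x \in `[0, 1] -> `|upper_step x| <= M.
Proof.
move=> x01; have [j jn [_ _ hj]] := grid_locate n_gt0 x01.
by rewrite (upper_stepE x01 jn hj) f_bounded ?grid_itv.
Qed.

Lemma sqr_sub_upper_step_le x : x \in `[0, 1] ->
  (f x - upper_step x) ^+ 2 <= 2 * M * jump_cover x.
Proof.
move=> x01; have [j jn [jx xj hj]] := grid_locate n_gt0 x01.
have jw : jump j <= jump_cover x.
  rewrite /jump_cover (bigD1_seq j) ?mem_index_iota ?iota_uniq //=.
  rewrite indicE mem_set /=; last by rewrite in_itv /= jx xj.
  rewrite mulr1 lerDl big_seq_cond sumr_ge0 // => i.
  rewrite mem_index_iota => /andP[/andP[_ ilt] _].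
  by rewrite mulr_ge0 ?jump_ge0 // indicE ler0n.
have fjx : f (grid j) <= f x by apply: f_nd; rewrite ?grid_itv // ltnW.
have fxj : f x <= f (grid j.+1) by apply: f_nd; rewrite ?grid_itv.
have := f_bounded x01; have := upper_step_bounded x01.
rewrite (upper_stepE x01 jn hj) !ler_norml /jump in jw * => /andP[? ?] /andP[? ?].
have : 0 <= M by rewrite addr_ge0.
nra.
Qed.

Lemma measurable_upper_step : measurable_fun I01 upper_step.
Proof.
apply: measurable_funB => //; apply: measurable_sum => i.
by apply: measurable_funM => //; exact: measurable_indic.
Qed.

Lemma jump_cover_integrable : mu.-integrable I01 (EFin \o jump_cover).
Proof.
apply: (integrable_sum_EFin mI01) => i _ _; apply: (integrableZl_EFin mI01).
apply: (bounded_integrable01 (M := 1)); first exact: measurable_indic.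
by move=> x _; exact: normr_indic_le1.
Qed.

Lemma Rintegral_jump_cover : \int[mu]_(x in I01) jump_cover x = (f 1 - f 0) / n%:R.
Proof.
rewrite (Rintegral_sum mI01); last first.
  move=> i _ _; apply: (integrableZl_EFin mI01).
  apply: (bounded_integrable01 (M := 1)); first exact: measurable_indic.
  by move=> x _; exact: normr_indic_le1.
rewrite (eq_big_seq (fun i => jump i / n%:R)); last first.
  move=> i; rewrite mem_index_iota => /andP[_ ilt].
  rewrite RintegralZl //; last first.
    apply: (bounded_integrable01 (M := 1)); first exact: measurable_indic.
    by move=> x _; exact: normr_indic_le1.
  by rewrite Rintegral_indic01 ?gridS ?grid_le ?grid_ge0 ?grid_le1.
by rewrite -big_distrl /= telescope_sumr // gridn // grid0.
Qed.

Lemma Rintegral_upper_stepM (q : R -> R) : mu.-integrable I01 (EFin \o q) ->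
  \int[mu]_(x in I01) (upper_step x * q x) =
  f 1 * \int[mu]_(x in I01) q x -
  \sum_(1 <= i < n) jump i * \int[mu]_(x in `[0, grid i]) q x.
Proof.
move=> iq.
have iIq i : mu.-integrable I01 (EFin \o (fun x => \1_(`[0, grid i] : set R) x * q x)).
  exact: integrable_indicM01.
transitivity (\int[mu]_(x in I01) (f 1 * q x -
    \sum_(1 <= i < n) jump i * (\1_(`[0, grid i] : set R) x * q x))).
  apply: eq_Rintegral => x _; rewrite /upper_step mulrBl big_distrl /=.
  by congr (_ - _); apply: eq_bigr => i _; ring.
rewrite RintegralB //; last 2 first.
- exact: integrableZl_EFin.
- by apply: (integrable_sum_EFin mI01) => i _ _; exact: integrableZl_EFin.
rewrite RintegralZl // (Rintegral_sum mI01); last by move=> i _ _; exact: integrableZl_EFin.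
congr (_ - _); apply: eq_big_seq => i; rewrite mem_index_iota => /andP[_ ilt].
by rewrite RintegralZl // Rintegral_indicM01 ?grid_le1 // ltnW.
Qed.

End upper_step_function.

Section monotone_pairing.
Context {R : realType} (f Q : R -> R) (n : nat) (B : R).
Local Notation mu := (@lebesgue_measure R).
Local Notation I01 := (`[0%R, 1%R]%classic : set R).
Local Notation grid := (@grid R n).
Hypothesis f_nd : {in `[0, 1] &, nondecreasing_fun f}.
Hypothesis n_gt1 : (1 < n)%N.
Hypothesis Q_int : mu.-integrable I01 (EFin \o Q).
Hypothesis Q2_int : mu.-integrable I01 (EFin \o (fun x => Q x ^+ 2)).
Hypothesis Q_partial : forall i, (0 < i)%N -> (i < n)%N ->
  `|\int[mu]_(x in `[0, grid i]) Q x| <= B.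
Let mI01 : measurable (I01 : set (measurableTypeR R)) := measurable_itv _.
Let n_gt0 : (0 < n)%N := ltnW n_gt1.
Local Notation M := (`|f 0| + `|f 1|).
Local Notation S := (n%:R^-1 * \int[mu]_(x in I01) Q x ^+ 2).

Let M_ge0 : 0 <= M. Proof. by rewrite addr_ge0. Qed.

Let S_ge0 : 0 <= S.
Proof. by rewrite mulr_ge0 ?invr_ge0 ?ler0n // Rintegral_ge0 // => x _; exact: sqr_ge0. Qed.

Let B_ge0 : 0 <= B. Proof. exact: le_trans (Q_partial _ n_gt1). Qed.

Lemma bounded_pairing_le (u : R -> R) (K : R) : measurable_fun I01 u ->
  (forall x, I01 x -> `|u x| <= K) ->
  `|\int[mu]_(x in I01) (u x * Q x)| <=
  2^-1 * (n%:R * \int[mu]_(x in I01) u x ^+ 2 + S).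
Proof.
move=> meas_u uK.
have bu : [bounded u x | x in I01] := le_bounded uK.
apply: le_trans (@normr_RintegralM_le _ _ _ mu I01 mI01 n%:R u Q _ _ _ _) _.
- by rewrite ltr0n.
- exact: integrableMl_EFin.
- apply: (bounded_integrable01 (M := K ^+ 2)); first exact: measurable_funM.
  move=> x Ix; rewrite normrX; have := uK x Ix; have := normr_ge0 (u x); nra.
- exact: Q2_int.
- by [].
Qed.

Lemma normr_Rintegral_partial_le : `|\int[mu]_(x in I01) Q x| <= B + 2^-1 * (1 + S).
Proof.
(* Split at t = (n - 1) / n; the last cell has measure 1 / n, which the weight n
   of [bounded_pairing_le] compensates. *)
pose t := grid n.-1; pose r x : R := 1 - \1_(`[0, t] : set R) x.
have t1 : t <= 1 by rewrite grid_le1 // leq_pred.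
have mr : measurable_fun I01 r by apply: measurable_funB => //; exact: measurable_indic.
have r_le1 x : I01 x -> `|r x| <= 1.
  move=> _; rewrite /r indicE.
  by case: (_ \in _); rewrite ?subrr ?subr0 ?normr0 ?normr1.
have -> : \int[mu]_(x in I01) Q x =
    \int[mu]_(x in `[0, t]) Q x + \int[mu]_(x in I01) (r x * Q x).
  transitivity (\int[mu]_(x in I01) (\1_(`[0, t] : set R) x * Q x + r x * Q x)).
    by apply: eq_Rintegral => x _; rewrite /r; ring.
  have br : [bounded r x | x in I01] := le_bounded r_le1.
  rewrite RintegralD //; first by rewrite Rintegral_indicM01.
    exact: (integrable_indicM01 0 t Q_int).
  exact: (integrableMl_EFin mI01 mr br Q_int).
apply: le_trans (ler_normD _ _) _; apply: lerD.
  by apply: Q_partial; rewrite ?ltn_predL // -ltnS prednK.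
rewrite (le_trans (bounded_pairing_le mr r_le1)) // ler_pM2l ?invr_gt0 // lerD2r.
have r2_le x : I01 x -> r x ^+ 2 <= \1_(`[t, 1] : set R) x.
  rewrite /= in_itv /= => /andP[x0 x1].
  rewrite /r !indicE !mem_setE /= !in_itv /= x0 x1 andbT.
  by case: (leP x t) => [_|/ltW ->]; rewrite ?subrr ?expr0n ?ler0n ?subr0 ?expr1n.
have : \int[mu]_(x in I01) r x ^+ 2 <= n%:R^-1.
  rewrite (le_trans (le_Rintegral mI01 _ _ r2_le)) //.
  - apply: (bounded_integrable01 (M := 1)); first exact: measurable_funM.
    by move=> x Ix; rewrite normrX expr_le1 ?r_le1.
  - apply: (bounded_integrable01 (M := 1)); first exact: measurable_indic.
    by move=> x _; exact: normr_indic_le1.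
  by rewrite Rintegral_indic01 ?grid_ge0 // -{1}(gridn n_gt0) -(gridS _ n.-1) prednK.
by move=> /(ler_wpM2l (ler0n _ n)); rewrite mulfV // pnatr_eq0 -lt0n.
Qed.

Let f_measurable : measurable_fun I01 f.
Proof. exact: nondecreasing_in_measurable ler01 f_nd. Qed.

Let step_error_le x : I01 x -> `|f x - upper_step f n x| <= 2 * M.
Proof.
move=> x01; apply: le_trans (ler_normB _ _) _; rewrite mulr2n mulrDl mul1r lerD //.
  exact: normr_nondecreasing_in_le ler01 f_nd x x01.
exact: upper_step_bounded.
Qed.

Let f01 : f 0 <= f 1.
Proof. by apply: f_nd; rewrite ?in_itv /= ?lexx ?ler01. Qed.

Let upper_step_bounded_on : [bounded upper_step f n x | x in I01].
Proof. exact: le_bounded (@upper_step_bounded _ _ _ f_nd n_gt0). Qed.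

Lemma upper_step_pairing_le :
  `|\int[mu]_(x in I01) (upper_step f n x * Q x)| <=
  M * `|\int[mu]_(x in I01) Q x| + B * (f 1 - f 0).
Proof.
rewrite Rintegral_upper_stepM //; apply: le_trans (ler_normB _ _) _; apply: lerD.
  by rewrite normrM ler_wpM2r // lerDr.
apply: le_trans (ler_norm_sum _ _ _) _.
apply: (@le_trans _ _ (\sum_(1 <= i < n) jump f n i * B)).
  apply: ler_sum_nat => i /andP[i0 ilt]; rewrite normrM ger0_norm ?jump_ge0 //.
  by rewrite ler_wpM2l ?jump_ge0 ?Q_partial.
rewrite -big_distrl /= telescope_sumr // (gridn n_gt0) mulrC ler_wpM2l //.
by rewrite lerD2l lerN2 f_nd ?grid_itv ?in_itv /= ?lexx ?ler01 ?grid_ge0.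
Qed.

Lemma step_error_pairing_le :
  `|\int[mu]_(x in I01) ((f x - upper_step f n x) * Q x)| <=
  M * (f 1 - f 0) + 2^-1 * S.
Proof.
have mg : measurable_fun I01 (fun x => f x - upper_step f n x).
  by apply: measurable_funB => //; exact: measurable_upper_step.
apply: le_trans (bounded_pairing_le mg step_error_le) _.
suff : n%:R * \int[mu]_(x in I01) (f x - upper_step f n x) ^+ 2 <= 2 * M * (f 1 - f 0).
  by move: (n%:R * _) => A; lra.
have g2_int : mu.-integrable I01 (EFin \o (fun x => (f x - upper_step f n x) ^+ 2)).
  apply: (bounded_integrable01 (M := (2 * M) ^+ 2)); first exact: measurable_funM.
  by move=> x Ix; rewrite normrX lerXn2r ?nnegrE ?step_error_le.
have : \int[mu]_(x in I01) (f x - upper_step f n x) ^+ 2 <=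
    2 * M * ((f 1 - f 0) / n%:R).
  rewrite -Rintegral_jump_cover // -RintegralZl //; last exact: jump_cover_integrable.
  apply: le_Rintegral => //; last by move=> x Ix; exact: sqr_sub_upper_step_le.
  exact/integrableZl_EFin/jump_cover_integrable.
move=> /(ler_wpM2l (ler0n _ n)).
suff -> : n%:R * (2 * M * ((f 1 - f 0) / n%:R)) = 2 * M * (f 1 - f 0) by [].
by field; rewrite pnatr_eq0 -lt0n.
Qed.

Theorem monotone_pairing_le :
  `|\int[mu]_(x in I01) (f x * Q x)| <= (M + 1) * (2 * B + S + M + 1).
Proof.
have iQs : mu.-integrable I01 (EFin \o (fun x => upper_step f n x * Q x)).
  exact: (integrableMl_EFin mI01 (measurable_upper_step f n) upper_step_bounded_on Q_int).
have iQe : mu.-integrable I01 (EFin \o (fun x => (f x - upper_step f n x) * Q x)).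
  apply: (integrableMl_EFin mI01 _ _ Q_int).
    by apply: measurable_funB => //; exact: measurable_upper_step.
  exact: le_bounded step_error_le.
have -> : \int[mu]_(x in I01) (f x * Q x) =
    \int[mu]_(x in I01) (upper_step f n x * Q x) +
    \int[mu]_(x in I01) ((f x - upper_step f n x) * Q x).
  by rewrite -RintegralD //; apply: eq_Rintegral => x _; ring.
have V_le : f 1 - f 0 <= M.
  by have := ler_norm (f 1); have := ler_norm (- f 0); rewrite normrN; lra.
have := normr_Rintegral_partial_le; have := upper_step_pairing_le.
have := step_error_pairing_le; have := ler_normD
  (\int[mu]_(x in I01) (upper_step f n x * Q x))
  (\int[mu]_(x in I01) ((f x - upper_step f n x) * Q x)).
move: (`|_ + _|) (`|\int[mu]_(x in I01) Q x|) => a q.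
have := f01; have := M_ge0; have := B_ge0; have := S_ge0; nra.
Qed.

End monotone_pairing.

Lemma nneseries_le_partial {R : realType} (u : nat -> R) (c : R) :
  (forall k, 0 <= u k) -> (forall m, \sum_(1 <= k < m) u k <= c) ->
  (\sum_(1 <= k <oo) (u k)%:E <= c%:E)%E.
Proof.
move=> u0 uc; apply: lime_le; first by apply: is_cvg_nneseries => k _ _; rewrite lee_fin.
by apply: nearW => m; rewrite sumEFin lee_fin.
Qed.

Lemma sqr_div_le_invB {R : realFieldType} (x e : R) : 0 < x -> 0 <= e ->
  e / (x + e) ^+ 2 <= x^-1 - (x + e)^-1.
Proof.
move=> x0 e0; have xe0 : 0 < x + e by rewrite ltr_wpDr.
have -> : x^-1 - (x + e)^-1 = e / (x * (x + e)) by field; rewrite !gt_eqF.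
rewrite ler_wpM2l // lef_pV2 ?posrE ?mulr_gt0 ?exprn_gt0 //.
by rewrite expr2 ler_wpM2r ?(ltW xe0) // lerDl.
Qed.

Section abel_dini.
Context {R : realType} (b : nat -> R).
Hypothesis b_unbounded : forall c : R, exists m, c < \sum_(1 <= k < m) b k ^+ 2.

(* Abel-Dini: the weights b_k / T_{k+1} are square summable, while
   sum_k b_k^2 / T_{k+1} diverges together with sum_k b_k^2. *)
Let T m : R := 1 + \sum_(1 <= k < m) b k ^+ 2.

Let T_gt0 m : 0 < T m.
Proof. by apply: lt_le_trans ltr01 _; rewrite lerDl sumr_ge0 // => k _; exact: sqr_ge0. Qed.

Let TS k : (0 < k)%N -> T k.+1 = T k + b k ^+ 2.
Proof. by move=> k0; rewrite /T big_nat_recr //= addrA. Qed.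

Let T_nondecreasing : nondecreasing_seq T.
Proof.
apply/nondecreasing_seqP => -[|m]; first by rewrite /T !big_geq.
by rewrite [T m.+2]TS // lerDl sqr_ge0.
Qed.

Let weights_sqr_le m : \sum_(1 <= k < m) (b k / T k.+1) ^+ 2 <= 1.
Proof.
case: m => [|m]; first by rewrite big_geq.
apply: (@le_trans _ _ (\sum_(1 <= k < m.+1) ((T k)^-1 - (T k.+1)^-1))).
  apply: ler_sum_nat => k /andP[k0 _]; rewrite expr_div_n TS //.
  exact/sqr_div_le_invB/sqr_ge0.
under eq_bigr do rewrite -opprB.
have T1 : T 1 = 1 by rewrite /T big_geq // addr0.
by rewrite sumrN telescope_sumr // opprB T1 invr1 gerBl invr_ge0 ltW.
Qed.

Let P m := \sum_(1 <= k < m) b k / T k.+1 * b k.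

Let P_increment m1 m2 : (1 <= m1 <= m2)%N -> (T m2 - T m1) / T m2 <= P m2 - P m1.
Proof.
move=> /andP[m1_gt0 m12]; rewrite /P (big_cat_nat m1_gt0 m12) /= addrC addrK.
rewrite -telescope_sumr // big_distrl /=; apply: ler_sum_nat => k /andP[m1k km2].
rewrite mulrAC -expr2 TS ?(leq_trans m1_gt0) // addrAC subrr add0r mulrC.
rewrite mulrC ler_wpM2l ?sqr_ge0 // lef_pV2 ?posrE // -TS ?(leq_trans m1_gt0) //.
exact: T_nondecreasing.
Qed.

Let P_unbounded j N : (0 < N)%N -> exists2 m, (N <= m)%N & j%:R / 2 <= P m.
Proof.
elim: j N => [|j IH] N N_gt0.
  exists N; rewrite // mul0r sumr_ge0 // => k _.
  by rewrite mulrAC -expr2 mulr_ge0 ?sqr_ge0 ?invr_ge0 ?ltW.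
have [m Nm Pm] := IH N N_gt0; have [m' Tm'] := b_unbounded (2 * T m - 1).
have m_gt0 : (0 < m)%N := leq_trans N_gt0 Nm.
exists (maxn m m'); first exact: leq_trans Nm (leq_maxl _ _).
have := P_increment (m1 := m) (m2 := maxn m m'); rewrite m_gt0 leq_maxl => /(_ isT).
have : T m' <= T (maxn m m') by apply: T_nondecreasing; exact: leq_maxr.
have : 2 * T m < T m' by rewrite [T m']/T; lra.
have := T_gt0 (maxn m m'); move: (T (maxn m m')) => X X0 TmTm' Tm'X.
have : 2^-1 <= (X - T m) / X by rewrite ler_pdivlMr // ler_pdivrMl //; lra.
by move: Pm; rewrite -natr1 /=; lra.
Qed.

Lemma abel_dini_pairing : exists a : nat -> R,
  (forall m, \sum_(1 <= k < m) a k ^+ 2 <= 1) /\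
  forall (C : R) (N : nat), exists2 n, (N <= n)%N & C < \sum_(1 <= k < n.+1) a k * b k.
Proof.
exists (fun k => b k / T k.+1); split => [|C N]; first exact: weights_sqr_le.
have [m Nm Pm] := P_unbounded (Num.Def.archi_bound (2 * `|C|)) (ltn0Sn N).
exists m.-1; first by rewrite -ltnS prednK // (leq_trans _ Nm).
rewrite prednK ?(leq_trans _ Nm) //; apply: lt_le_trans Pm.
have := archi_boundP (normr_ge0 (2 * `|C|)); rewrite normrM ger0_norm // normr_id.
by have := ler_norm C; lra.
Qed.

End abel_dini.

Lemma l2_of_bounded_pairings {R : realType} (b : nat -> R) :
  (forall a : nat -> R, (forall m, \sum_(1 <= k < m) a k ^+ 2 <= 1) ->
    exists (K : R) (N : nat), forall n, (N <= n)%N -> \sum_(1 <= k < n.+1) a k * b k <= K) ->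
  (\sum_(1 <= k <oo) (b k ^+ 2)%:E < +oo)%E.
Proof.
move=> bounded; apply: contrapT => b_not_l2.
have b_unbounded (c : R) : exists m, c < \sum_(1 <= k < m) b k ^+ 2.
  apply: contrapT => /forallNP c_ub; apply: b_not_l2.
  apply: le_lt_trans (nneseries_le_partial (c := c) _ _) (ltry _) => [k|m].
    exact: sqr_ge0.
  by rewrite leNgt; apply/negP; exact: c_ub.
have [a [a_le unbounded]] := abel_dini_pairing b_unbounded.
have [K [N K_ub]] := bounded a a_le; have [n Nn Kn] := unbounded K N.
by move: (K_ub n Nn); rewrite leNgt Kn.
Qed.

Lemma l2_subr {R : realType} (x y : nat -> R) :
  (\sum_(1 <= k <oo) (x k ^+ 2)%:E < +oo)%E ->
  (\sum_(1 <= k <oo) (y k ^+ 2)%:E < +oo)%E ->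
  (\sum_(1 <= k <oo) ((x k - y k) ^+ 2)%:E < +oo)%E.
Proof.
move=> x_l2 y_l2.
apply: (@le_lt_trans _ _ (\sum_(1 <= k <oo) (2%:E * (x k ^+ 2)%:E + 2%:E * (y k ^+ 2)%:E))%E).
  apply: lee_nneseries => [k _ _|k _]; first by rewrite lee_fin sqr_ge0.
  by rewrite -!EFinM -EFinD lee_fin; have := sqr_ge0 (x k + y k); nra.
rewrite nneseriesD => [|k _ _|k _ _]; last 2 first.
- by rewrite mule_ge0 // lee_fin sqr_ge0.
- by rewrite mule_ge0 // lee_fin sqr_ge0.
rewrite !nneseriesZl => [|k _|k _]; last 2 first.
- by rewrite lee_fin sqr_ge0.
- by rewrite lee_fin sqr_ge0.
by rewrite lte_add_pinfty // lte_mul_pinfty.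
Qed.

Lemma sqr_mul_ln_le {R : realType} (x C : R) (k : nat) : (0 < k)%N ->
  `|x| <= C * (Num.sqrt (k%:R) / (ln (k.+1%:R)) ^+ 2) ->
  (x * ln k%:R) ^+ 2 <= C ^+ 2 / ln (2 : R) ^+ 2 * k%:R.
Proof.
move=> k_gt0 xC; have ln2_gt0 : 0 < ln (2 : R) by rewrite ln_gt0 // ltr1n.
pose L := ln (k.+1%:R : R); pose l := ln (k%:R : R); pose s := Num.sqrt (k%:R : R).
have l_ge0 : 0 <= l by rewrite ln_ge0 // ler1n.
have lL : l <= L by rewrite ler_ln ?posrE ?ltr0n // ler_nat.
have L2 : ln 2 <= L by rewrite ler_ln ?posrE ?ltr0n // ler_nat ltnS.
have xL : `|x| * L ^+ 2 <= C * s.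
  have L_gt0 : 0 < L ^+ 2 by rewrite exprn_gt0 // (lt_le_trans ln2_gt0).
  by rewrite -ler_pdivlMr // -mulrA.
have xl : (`|x| * l * ln 2) ^+ 2 <= C ^+ 2 * k%:R.
  have x_ge0 := normr_ge0 x.
  have lL2 : l * ln 2 <= L ^+ 2 by rewrite expr2 ler_pM // ltW.
  have : `|x| * l * ln 2 <= C * s by apply: le_trans xL; rewrite -mulrA ler_wpM2l.
  have : 0 <= `|x| * l * ln 2 by rewrite !mulr_ge0 // ltW.
  by rewrite -[k%:R]sqr_sqrtr ?ler0n // -/s -exprMn; nra.
rewrite mulrAC ler_pdivlMr ?exprn_gt0 // -exprMn.
by rewrite -real_normK ?num_real // !normrM (ger0_norm l_ge0) (ger0_norm (ltW ln2_gt0)).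
Qed.

Lemma sqr_ln_weight_le_linear {R : realType} (d : nat -> R) :
  (exists (C : R) (N : nat), forall n, (N <= n)%N ->
     `|d n| <= C * (Num.sqrt (n%:R) / (ln (n.+1%:R)) ^+ 2)) ->
  exists2 D : R, 0 <= D & forall k, (0 < k)%N -> (d k * ln k%:R) ^+ 2 <= D * k%:R.
Proof.
move=> [C [N dC]]; pose D0 := \sum_(0 <= j < N) (d j * ln j%:R) ^+ 2.
have D0_ge0 : 0 <= D0 by rewrite sumr_ge0 // => j _; exact: sqr_ge0.
have CD_ge0 : 0 <= C ^+ 2 / ln (2 : R) ^+ 2 by rewrite mulr_ge0 ?invr_ge0 ?sqr_ge0.
exists (C ^+ 2 / ln (2 : R) ^+ 2 + D0); first exact: addr_ge0.
move=> k k_gt0; rewrite mulrDl.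
have D0k : 0 <= D0 * k%:R by rewrite mulr_ge0.
have CDk : 0 <= C ^+ 2 / ln (2 : R) ^+ 2 * k%:R by rewrite mulr_ge0.
have [kN|Nk] := ltnP k N; last by have := sqr_mul_ln_le k_gt0 (dC k Nk); lra.
have : D0 <= D0 * k%:R by rewrite ler_peMr // ler1n.
have : (d k * ln k%:R) ^+ 2 <= D0.
  rewrite /D0 (bigD1_seq k) ?mem_index_iota ?iota_uniq //= lerDl.
  by rewrite sumr_ge0 // => j _; exact: sqr_ge0.
lra.
Qed.

Lemma mean_sqr_coef_le {R : realType} (d a : nat -> R) (D : R) (n : nat) :
  (forall k, (0 < k)%N -> (d k * ln k%:R) ^+ 2 <= D * k%:R) ->
  (forall m, \sum_(1 <= k < m) a k ^+ 2 <= 1) -> (0 < n)%N -> 0 <= D ->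
  n%:R^-1 * \sum_(1 <= k < n.+1) (d k * a k * ln k%:R) ^+ 2 <= D.
Proof.
move=> dD a_le n_gt0 D_ge0; rewrite ler_pdivrMl ?ltr0n // mulrC.
apply: (@le_trans _ _ (\sum_(1 <= k < n.+1) D * n%:R * a k ^+ 2)).
  apply: ler_sum_nat => k /andP[k_gt0 kn].
  rewrite [_ ^+ 2](_ : _ = (d k * ln k%:R) ^+ 2 * a k ^+ 2); last by ring.
  rewrite ler_wpM2r ?sqr_ge0 // (le_trans (dD k k_gt0)) // ler_wpM2l // ler_nat.
  by rewrite -ltnS.
by rewrite -mulr_sumr ler_piMr ?mulr_ge0 ?ler0n.
Qed.

Lemma Qn_pairing_le {R : realType} (phi : nat -> R -> R) (d a : nat -> R) (f : R -> R)
    (n : nat) : ONS phi -> {in `[0, 1] &, nondecreasing_fun f} -> (1 < n)%N ->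
  `|\sum_(1 <= k < n.+1) d k * a k * ln k%:R * Ck phi f k| <=
  (`|f 0| + `|f 1| + 1) * (2 * Bn phi d a n +
    n%:R^-1 * \sum_(1 <= k < n.+1) (d k * a k * ln k%:R) ^+ 2 + (`|f 0| + `|f 1|) + 1).
Proof.
move=> phi_ons f_nd n_gt1; pose c k := d k * a k * ln k%:R.
have mf := nondecreasing_in_measurable ler01 f_nd.
have bf := nondecreasing_in_bounded ler01 f_nd.
rewrite -(Rintegral_mul_ONS_sum phi_ons c n mf bf) -(Rintegral_ONS_sum_sqr phi_ons c n).
apply: (monotone_pairing_le f_nd n_gt1).
- exact: ONS_sum_integrable.
- exact: ONS_sum_sqr_integrable.
move=> i i_gt0 i_lt_n; rewrite /Bn.
pose F j := `|\int[lebesgue_measure]_(x in `[0, j%:R / n%:R]) Qn phi d a n x|.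
change (F i <= \big[Num.max/0]_(1 <= j < n) F j).
by apply: le_bigmax_seq; rewrite ?mem_index_iota ?i_gt0.
Qed.

Lemma monotone_coef_l2 {R : realType} (phi : nat -> R -> R) (d : nat -> R) (D : R)
    (f : R -> R) : ONS phi -> 0 <= D ->
  (forall k, (0 < k)%N -> (d k * ln k%:R) ^+ 2 <= D * k%:R) ->
  (forall a : nat -> R, in_l2 a ->
     exists C : R, exists N : nat, forall n : nat, (N <= n)%N -> Bn phi d a n <= C) ->
  {in `[0, 1] &, nondecreasing_fun f} ->
  (\sum_(1 <= k <oo) ((d k * ln k%:R * Ck phi f k) ^+ 2)%:E < +oo)%E.
Proof.
move=> phi_ons D_ge0 dD Bn_bounded f_nd; apply: l2_of_bounded_pairings => a a_le.
have a_l2 : in_l2 a.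
  apply: le_lt_trans (nneseries_le_partial (c := 1) _ a_le) (ltry _) => k.
  exact: sqr_ge0.
have [C [N BnC]] := Bn_bounded a a_l2; pose M := `|f 0| + `|f 1|.
exists ((M + 1) * (2 * C + D + M + 1)), (maxn N 2) => n; rewrite geq_max => /andP[Nn n_gt1].
rewrite (eq_bigr (fun k => d k * a k * ln k%:R * Ck phi f k)) => [|k _]; last by ring.
apply: le_trans (ler_norm _) _; apply: le_trans (Qn_pairing_le d a phi_ons f_nd n_gt1) _.
rewrite ler_wpM2l ?addr_ge0 // -/M.
have := BnC n Nn; have := mean_sqr_coef_le dD a_le (ltnW n_gt1) D_ge0; lra.
Qed.

Theorem theorem3 (R : realType) (phi : nat -> R -> R) (d : nat -> R) :
  ONS phi ->
  (exists C : R, exists N : nat, forall n : nat, (N <= n)%N ->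
     `|d n| <= C * (Num.sqrt (n%:R) / (ln (n.+1%:R)) ^+ 2)) ->
  (forall a : nat -> R, in_l2 a ->
     exists C : R, exists N : nat, forall n : nat, (N <= n)%N -> Bn phi d a n <= C) ->
  forall f : R -> R, bounded_variation 0 1 f ->
  (\sum_(1 <= k <oo) ((d k) ^+ 2 * (Ck phi f k) ^+ 2 * (ln (k%:R)) ^+ 2)%:E < +oo)%E.
Proof.
move=> phi_ons d_growth Bn_bounded f f_bv.
have [D D_ge0 dD] := sqr_ln_weight_le_linear d_growth.
have [g [h [g_nd h_nd fE]]] := bounded_variation_nondecreasing_sub f_bv.
have coef_l2 u := monotone_coef_l2 (f := u) phi_ons D_ge0 dD Bn_bounded.
have CkB_gh k : (0 < k)%N -> Ck phi f k = Ck phi g k - Ck phi h k.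
  move=> k_gt0; apply: (CkB phi_ons k_gt0) (fun x => fE x).
  - exact: nondecreasing_in_measurable ler01 g_nd.
  - exact: nondecreasing_in_bounded ler01 g_nd.
  - exact: nondecreasing_in_measurable ler01 h_nd.
  - exact: nondecreasing_in_bounded ler01 h_nd.
apply: le_lt_trans (l2_subr (coef_l2 g g_nd) (coef_l2 h h_nd)).
rewrite le_eqVlt; apply/predU1P; left.
apply/congr_lim/funext => m; apply: eq_big_nat => k /andP[k_gt0 _].
by rewrite CkB_gh //; congr (_%:E); ring.
Qed.
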